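(* Let $X=\{x_0,x_1,\ldots,x_m\}$ and let $\mathbb{R}^m_{pi}\langle\langle X\rangle\rangle$ be the set of purely improper series in $\mathbb{R}^m\langle\langle X\rangle\rangle$. Then the set $\delta\sqcup\!\sqcup\,\mathbb{R}^m_{pi}\langle\langle X\rangle\rangle=\{\delta_d : d\in \mathbb{R}^m_{pi}\langle\langle X\rangle\rangle\}$ forms a group under the multiplicative composition product $\delta_c\circ\delta_d:=\delta_{d\,\sqcup\!\sqcup\,(c\,\tilde\circ\,\delta_d)}$, with identity element $\delta_{\mathbb{1}}$, where $\mathbb{1}=[1\,1\cdots 1]^t\in\mathbb{R}^m$.
   Context: $X$ is a finite alphabet of noncommuting letters, $X^\ast$ the free monoid of words (with empty word $\emptyset$), and $\mathbb{R}^\ell\langle\langle X\rangle\rangle$ the set of formal power series $c=\sum_{\eta\in X^\ast}(c,\eta)\eta$ with coefficients $(c,\eta)\in\mathbb{R}^\ell$; $c_i$ denotes the $i$-th component series. A series is proper if $(c,\emptyset)=0$; $c\in\mathbb{R}^\ell\langle\langle X\rangle\rangle$ is purely improper if $(c_i,\emptyset)\neq 0$ for every $i=1,\ldots,\ell$. All products of vector-valued series are taken componentwise. The shuffle product is the bilinear product on words defined by $(x_i\eta)\sqcup\!\sqcup(x_j\xi)=x_i(\eta\sqcup\!\sqcup x_j\xi)+x_j(x_i\eta\sqcup\!\sqcup\xi)$, $\eta\sqcup\!\sqcup\emptyset=\emptyset\sqcup\!\sqcup\eta=\eta$, extended to series. The multiplicative mixed composition product of $c\in\mathbb{R}^p\langle\langle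 X\rangle\rangle$ and $d\in\mathbb{R}^m\langle\langle X\rangle\rangle$ is $c\,\tilde\circ\,\delta_d=\sum_{\eta\in X^\ast}(c,\eta)\,\bar\phi_d(\eta)(\mathbf{1})$, where $\mathbf{1}=1\emptyset$ and $\bar\phi_d$ is the algebra homomorphism from words (under concatenation) to linear endomorphisms of $\mathbb{R}\langle\langle X\rangle\rangle$ (under composition) determined by $\bar\phi_d(x_0)(e)=x_0e$ and $\bar\phi_d(x_i)(e)=x_i(d_i\sqcup\!\sqcup e)$ for $i=1,\ldots,m$, with $\bar\phi_d(\emptyset)$ the identity. For $d\in\mathbb{R}^m\langle\langle X\rangle\rangle$, $\delta_d$ is a formal symbol (standing for $\delta\sqcup\!\sqcup d$, the generating series of the operator $u\mapsto u\cdot F_d[u]$, $F_d$ the Chen-Fliess series of $d$); $\delta_c=\delta_d$ iff $c=d$. *)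

From HB Require Import structures.
From mathcomp Require Import all_boot all_order all_algebra.
From mathcomp Require Import reals.
Set Implicit Arguments. Unset Strict Implicit. Unset Printing Implicit Defensive.
Import Order.TTheory GRing.Theory Num.Theory.
Local Open Scope ring_scope.

(* Alphabet X = {x_0, x_1, ..., x_m} is 'I_m.+1 : letter ord0 is x_0, and
   letter (lift ord0 i) for i : 'I_m is x_{i+1}, paired with component i of a
   vector series in R^m<<X>>. *)
Definition word (m : nat) := seq 'I_m.+1.

Definition series (R : realType) (m : nat) := word m -> R.
Definition vseries (R : realType) (l m : nat) := 'I_l -> series R m.

Section Series.
Variables (R : realType) (m : nat).

Definition one_ser : series R m := fun w => if w is [::] then 1 else 0.

(* This is the
   bilinear extension of the recursive shuffle on words. *)
Definition shuffle (c d : series R m) : series R m :=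
  fun w => \sum_(b : (size w).-tuple bool)
             c (mask (tval b) w) * d (mask (map negb (tval b)) w).

Definition prepend (a : 'I_m.+1) (e : series R m) : series R m :=
  fun w => match w with
           | a' :: w' => if a' == a then e w' else 0
           | [::] => 0
           end.

Definition phi_letter (d : vseries R m m) (a : 'I_m.+1) (e : series R m)
  : series R m :=
  match unlift ord0 a with
  | None => prepend a e
  | Some i => prepend a (shuffle (d i) e)
  end.

Definition phi_word (d : vseries R m m) (eta : word m) (e : series R m)
  : series R m := foldr (phi_letter d) e eta.

(* Since phibar_d(eta)(1) only has words of
   length >= |eta| in its support, the coefficient at w of the (formally
   infinite) sum over eta only involves words eta with |eta| <= |w|. *)
Definition mixcomp (p : nat) (c : vseries R p m) (d : vseries R m m)
  : vseries R p m :=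
  fun i w => \sum_(k < (size w).+1) \sum_(t : k.-tuple 'I_m.+1)
               c i (tval t) * phi_word d (tval t) one_ser w.

Definition purely_improper (l : nat) (c : vseries R l m) : Prop :=
  forall i : 'I_l, c i [::] <> 0.

(* formal symbols delta_d; Delta is injective, so delta_c = delta_d iff c = d *)
Variant delta_ser := Delta of vseries R m m.

Definition dcomp (x y : delta_ser) : delta_ser :=
  let: Delta c := x in let: Delta d := y in
  Delta (fun i => shuffle (d i) (mixcomp c d i)).

Definition one_vec : vseries R m m := fun _ => one_ser.

Definition delta_pi : delta_ser -> Prop :=
  fun x => exists d, purely_improper d /\ x = Delta d.

End Series.

From HB Require Import structures.
From mathcomp Require Import all_boot all_order all_algebra.
From mathcomp Require Import reals boolp.
Set Implicit Arguments. Unset Strict Implicit. Unset Printing Implicit Defensive.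
Import Order.TTheory GRing.Theory Num.Theory.
Local Open Scope ring_scope.

(* Everything is driven by left quotients a^-1 c (w |-> c (a w)).  Putting
   d_(x_0) := 1, every letter map of phibar_d reads e |-> a (d_a ш e), and
   c ~o delta_d is the series with constant term c(empty) and
   a^-1 (c ~o delta_d) = d_a ш (a^-1 c ~o delta_d).  Induction on the length
   of words then shows that c |-> c ~o delta_d is a morphism of shuffle
   algebras and that (c ~o delta_d) ~o delta_e = c ~o delta_(e ш (d ~o delta_e)),
   which is associativity.  For inverses, the coefficient of w in
   d_j ш (c ~o delta_d) is d_j(empty) * prod_(a in w) d_a(empty) * c(w) plus
   terms involving c on shorter words only; for purely improper d this
   triangular system is solved by forward substitution, and left inverses in
   a monoid are two-sided. *)

Lemma linv_rinv (T : Type) (op : T -> T -> T) (e x y z : T) :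
  op (op z y) x = op z (op y x) -> op e x = x -> op z e = z ->
  op y x = e -> op z y = e -> op x y = e.
Proof. by move=> zyxA ex ze yx zy; rewrite -zy -[in LHS]ex -zy zyxA yx ze. Qed.

Lemma big_tupleS (V : nmodType) (T : finType) n (F : n.+1.-tuple T -> V) :
  \sum_(t : n.+1.-tuple T) F t = \sum_(x : T) \sum_(t : n.-tuple T) F [tuple of x :: t].
Proof.
rewrite pair_big (reindex (fun p : T * n.-tuple T => [tuple of p.1 :: p.2])) //=.
exists (fun t : n.+1.-tuple T => (thead t, [tuple of behead t])).
  by move=> [x t] _; congr pair; apply: val_inj.
by move=> t _; rewrite [RHS]tuple_eta.
Qed.

Lemma big_tuple0 (V : nmodType) (T : finType) (F : 0.-tuple T -> V) :
  \sum_(t : 0.-tuple T) F t = F [tuple].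
Proof. by rewrite (big_pred1 [tuple]) // => t; rewrite /= (tuple0 t); apply/esym/eqP. Qed.

Section Shuffle.
Variables (R : realType) (m : nat).
Notation series := (series R m).
Notation word := (word m).
Implicit Types (a : 'I_m.+1) (c d e f g : series) (w : word).

Definition lquot a f : series := fun w => f (a :: w).

Lemma shuffle_nil c d : shuffle c d [::] = c [::] * d [::].
Proof. by rewrite /shuffle big_tuple0. Qed.

Lemma shuffle_cons c d a w :
  shuffle c d (a :: w) = shuffle (lquot a c) d w + shuffle c (lquot a d) w.
Proof. by rewrite /shuffle /= big_tupleS big_bool. Qed.

Lemma lquot_shuffle c d a :
  lquot a (shuffle c d) = shuffle (lquot a c) d \+ shuffle c (lquot a d).
Proof. by apply/funext => w; rewrite /lquot shuffle_cons. Qed.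

Lemma eq_shuffle c c' d d' w :
  (forall u, (size u <= size w)%N -> c u = c' u) ->
  (forall u, (size u <= size w)%N -> d u = d' u) ->
  shuffle c d w = shuffle c' d' w.
Proof.
elim: w c c' d d' => [|a w IH] c c' d d' eq_c eq_d.
  by rewrite !shuffle_nil eq_c ?eq_d.
by rewrite !shuffle_cons; congr (_ + _); apply: IH => u le_uw;
  rewrite /lquot ?eq_c ?eq_d //= ?ltnS // leqW.
Qed.

Lemma shuffle_addl c c' d : shuffle (c \+ c') d = shuffle c d \+ shuffle c' d.
Proof.
by apply/funext => w; rewrite /shuffle /= -big_split; apply: eq_bigr => b _; rewrite mulrDl.
Qed.

Lemma shuffle_addr c d d' : shuffle c (d \+ d') = shuffle c d \+ shuffle c d'.
Proof.
by apply/funext => w; rewrite /shuffle /= -big_split; apply: eq_bigr => b _; rewrite mulrDr.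
Qed.

Lemma shuffle0r c : shuffle c \0 = \0.
Proof. by apply/funext => w; rewrite /shuffle big1 // => b _; rewrite mulr0. Qed.

Lemma shuffleC c d : shuffle c d = shuffle d c.
Proof.
apply/funext => w; elim: w c d => [|a w IH] c d; first by rewrite !shuffle_nil mulrC.
by rewrite !shuffle_cons addrC; congr (_ + _); apply: IH.
Qed.

Lemma shuffle1l d : shuffle (@one_ser R m) d = d.
Proof.
apply/funext => w; elim: w d => [|a w IH] d; first by rewrite shuffle_nil mul1r.
by rewrite shuffle_cons (_ : lquot a _ = \0) // shuffleC shuffle0r add0r IH.
Qed.

Lemma shuffle1r d : shuffle d (@one_ser R m) = d.
Proof. by rewrite shuffleC shuffle1l. Qed.

Lemma shuffleA c d e : shuffle c (shuffle d e) = shuffle (shuffle c d) e.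
Proof.
apply/funext => w; elim: w c d e => [|a w IH] c d e; first by rewrite !shuffle_nil mulrA.
rewrite !shuffle_cons !lquot_shuffle shuffle_addl shuffle_addr /= !IH.
by rewrite addrA.
Qed.

End Shuffle.

Section Triangular.
Variables (R : realType) (m : nat).
Notation series := (series R m).
Notation word := (word m).
Implicit Types (c g : series) (w : word) (L : series -> series) (D : word -> R).

Definition triangular L D := forall c c' w,
  (forall v, (size v < size w)%N -> c v = c' v) ->
  L c w - D w * c w = L c' w - D w * c' w.

Lemma triangular_causal L D c c' w : triangular L D ->
  (forall u, (size u <= size w)%N -> c u = c' u) -> L c w = L c' w.
Proof.
move=> triL eq_c; apply: (@addIr _ (- (D w * c w))).
by rewrite [in RHS]eq_c // (triL c c' w) // => v /ltnW; apply: eq_c.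
Qed.

Lemma triangular_comp L1 D1 L2 D2 : triangular L1 D1 -> triangular L2 D2 ->
  triangular (L1 \o L2) (fun w => D1 w * D2 w).
Proof.
move=> tri1 tri2 c c' w eq_c.
have eq_L2c v : (size v < size w)%N -> L2 c v = L2 c' v.
  move=> lt_vw; apply: triangular_causal tri2 _ => u le_uv.
  exact/eq_c/(leq_ltn_trans le_uv).
have split_diag c0 : L1 (L2 c0) w - D1 w * D2 w * c0 w =
    L1 (L2 c0) w - D1 w * L2 c0 w + D1 w * (L2 c0 w - D2 w * c0 w).
  by rewrite mulrBr addrA subrK mulrA.
by rewrite /= !split_diag (tri1 _ _ _ eq_L2c) (tri2 _ _ _ eq_c).
Qed.

Lemma triangular_shuffle g : triangular (shuffle g) (fun=> g [::]).
Proof.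
move=> c c' w; elim: w c c' => [|a w IH] c c' eq_c.
  by rewrite !shuffle_nil !subrr.
rewrite !shuffle_cons -!addrA (IH (lquot a c) (lquot a c')) => [|v lt_vw].
  by congr (_ + _); apply: eq_shuffle => // u le_uw; apply: eq_c.
exact: eq_c.
Qed.

Lemma shuffle_lower g c w : (forall v, (size v < size w)%N -> c v = 0) ->
  shuffle g c w = g [::] * c w.
Proof.
move=> c_lower; have := @triangular_shuffle g c \0 w c_lower.
by rewrite shuffle0r /= mulr0 subr0 => /eqP; rewrite subr_eq0 => /eqP.
Qed.

Section ForwardSubstitution.
Variables (L : series -> series) (D : word -> R) (g : series).

Fixpoint forward_subst_upto n : series :=
  if n is n.+1 then fun w =>
    if (size w < n)%N then forward_subst_upto n w
    else (g w - (L (forward_subst_upto n) w - D w * forward_subst_upto n w)) / D w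
  else \0.

Definition forward_subst : series := fun w => forward_subst_upto (size w).+1 w.

Lemma forward_subst_uptoE n v : (size v < n)%N -> forward_subst_upto n v = forward_subst v.
Proof.
elim: n => // n IH; rewrite ltnS leq_eqVlt => /orP[/eqP eq_vn | lt_vn].
  by rewrite /forward_subst eq_vn.
by rewrite /= lt_vn IH.
Qed.

Lemma forward_substP : (forall w, D w != 0) -> triangular L D -> L forward_subst = g.
Proof.
move=> D_neq0 triL; apply/funext => w.
have := triL _ _ w (fun v lt_vw => esym (forward_subst_uptoE lt_vw)).
set r := (X in _ = X) => E.
have fsE : D w * forward_subst w = g w - r by rewrite /forward_subst /= ltnn mulrC divfK.
by move: E; rewrite fsE => /(canRL (subrK _)); rewrite addrC subrK.
Qed.

End ForwardSubstitution.

End Triangular.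

Section MixedComposition.
Variables (R : realType) (m : nat) (d : vseries R m m).
Notation series := (series R m).
Notation word := (word m).
Implicit Types (a : 'I_m.+1) (c e g : series) (t w : word).

Definition dletter a : series :=
  if unlift ord0 a is Some i then d i else @one_ser R m.

Lemma phi_letterE a e : phi_letter d a e = prepend a (shuffle (dletter a) e).
Proof. by rewrite /phi_letter /dletter; case: unlift => // ; rewrite shuffle1l. Qed.

Definition phi_one t : series := phi_word d t (@one_ser R m).

Lemma phi_one_cons_nil a t : phi_one (a :: t) [::] = 0.
Proof. by rewrite /phi_one /= phi_letterE. Qed.

Lemma phi_one_cons a t b w : phi_one (a :: t) (b :: w) =
  if b == a then shuffle (dletter a) (phi_one t) w else 0.
Proof. by rewrite /phi_one /= phi_letterE. Qed.

Lemma phi_one_small t w : (size w < size t)%N -> phi_one t w = 0.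
Proof.
elim: t w => [|a t IH] [|b w] // lt_wt; first exact: phi_one_cons_nil.
rewrite phi_one_cons; case: eqP => // _.
rewrite (@eq_shuffle _ _ _ (dletter a) _ \0) ?shuffle0r // => u le_uw.
exact/IH/(leq_ltn_trans le_uw).
Qed.

Definition diag t : R := \prod_(a <- t) dletter a [::].

Lemma phi_one_diag t w : size w = size t -> phi_one t w = (t == w)%:R * diag t.
Proof.
elim: t w => [|a t IH] [|b w] // => [_|[eq_size]]; first by rewrite /diag big_nil mulr1.
rewrite phi_one_cons eqseq_cons /diag big_cons -/(diag t).
case: eqVneq => _; last by rewrite mul0r.
rewrite shuffle_lower => [|v lt_vw]; last by rewrite phi_one_small // -eq_size.
by rewrite IH // mulrCA.
Qed.

Lemma diag_neq0 t : purely_improper d -> diag t != 0.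
Proof.
move=> pi_d; rewrite /diag; elim: t => [|a t IH]; first by rewrite big_nil oner_neq0.
rewrite big_cons mulf_neq0 // /dletter; case: unlift => [i|]; last exact: oner_neq0.
exact/eqP/pi_d.
Qed.

Definition mcomp_upto N c : series :=
  fun w => \sum_(k < N) \sum_(t : k.-tuple 'I_m.+1) c t * phi_one t w.

Definition mcomp c : series := fun w => mcomp_upto (size w).+1 c w.

Lemma mcomp_uptoE N c w : (size w < N)%N -> mcomp_upto N c w = mcomp c w.
Proof.
move=> lt_wN; rewrite /mcomp /mcomp_upto -(subnKC lt_wN) big_split_ord /=.
rewrite [X in _ + X]big1 ?addr0 // => k _; rewrite big1 // => t _.
by rewrite phi_one_small ?mulr0 // size_tuple ltnS leq_addr.
Qed.

Lemma mcomp_split c w : mcomp c w = mcomp_upto (size w) c w + diag w * c w.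
Proof.
rewrite /mcomp /mcomp_upto big_ord_recr /=; congr (_ + _).
rewrite (bigD1 (in_tuple w)) //= big1 => [|t neq_tw].
  by rewrite phi_one_diag ?size_tuple // eqxx mul1r addr0 mulrC.
move: neq_tw; rewrite -val_eqE phi_one_diag ?size_tuple // => /negbTE ->.
by rewrite mul0r mulr0.
Qed.

Lemma triangular_mcomp : triangular mcomp diag.
Proof.
move=> c c' w eq_c; rewrite !mcomp_split !addrK.
by apply: eq_bigr => k _; apply: eq_bigr => t _; rewrite eq_c // size_tuple.
Qed.

Lemma mcomp_nil c : mcomp c [::] = c [::].
Proof. by rewrite /mcomp /mcomp_upto big_ord1 big_tuple0 mulr1. Qed.

Lemma shuffle_mcomp_upto g N c w : shuffle g (mcomp_upto N c) w =
  \sum_(k < N) \sum_(t : k.-tuple 'I_m.+1) c t * shuffle g (phi_one t) w.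
Proof.
rewrite /shuffle /mcomp_upto.
under eq_bigr => b _ do rewrite mulr_sumr.
rewrite exchange_big; apply: eq_bigr => k _.
under eq_bigr => b _ do rewrite mulr_sumr.
rewrite exchange_big; apply: eq_bigr => t _; rewrite mulr_sumr.
by apply: eq_bigr => b _; rewrite mulrCA.
Qed.

Lemma mcomp_cons c a w :
  mcomp c (a :: w) = shuffle (dletter a) (mcomp (lquot a c)) w.
Proof.
rewrite -(@eq_shuffle _ _ (dletter a) _ (mcomp_upto (size w).+1 (lquot a c))) // => [|u le_uw];
  last exact/mcomp_uptoE.
rewrite shuffle_mcomp_upto /mcomp /mcomp_upto /= big_ord_recl big_tuple0 /= mulr0 add0r.
apply: eq_bigr => k _; rewrite big_tupleS exchange_big /=; apply: eq_bigr => t _.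
rewrite (bigD1 a) //= big1 ?addr0 => [|b neq_ba]; rewrite phi_letterE /=.
  by rewrite eqxx.
by rewrite eq_sym (negbTE neq_ba) mulr0.
Qed.

Lemma lquot_mcomp c a : lquot a (mcomp c) = shuffle (dletter a) (mcomp (lquot a c)).
Proof. by apply/funext => w; rewrite /lquot mcomp_cons. Qed.

Lemma mcomp_add c c' : mcomp (c \+ c') = mcomp c \+ mcomp c'.
Proof.
apply/funext => w; rewrite /mcomp /mcomp_upto /= -big_split; apply: eq_bigr => k _.
by rewrite -big_split; apply: eq_bigr => t _; rewrite mulrDl.
Qed.

Lemma mcomp0 : mcomp \0 = \0.
Proof.
apply/funext => w; rewrite /mcomp /mcomp_upto big1 // => k _.
by rewrite big1 // => t _; rewrite mul0r.
Qed.

Lemma mcomp1 : mcomp (@one_ser R m) = @one_ser R m.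
Proof.
apply/funext => -[|a w]; first by rewrite mcomp_nil.
by rewrite mcomp_cons (_ : lquot a _ = \0) // mcomp0 shuffle0r.
Qed.

Lemma mcomp_shuffle c c' : mcomp (shuffle c c') = shuffle (mcomp c) (mcomp c').
Proof.
apply/funext => w; have [n lt_wn] := ubnP (size w).
elim: n => // n IH in w c c' lt_wn *.
case: w lt_wn => [|a w] /= lt_wn; first by rewrite mcomp_nil !shuffle_nil !mcomp_nil.
rewrite mcomp_cons shuffle_cons !lquot_mcomp lquot_shuffle mcomp_add.
rewrite (@eq_shuffle _ _ _ (dletter a) _ (shuffle (mcomp (lquot a c)) (mcomp c') \+
                              shuffle (mcomp c) (mcomp (lquot a c')))) => // [|u le_uw].
  by rewrite shuffle_addr /= !shuffleA (shuffleC (dletter a) (mcomp c)).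
by rewrite /= !IH // (leq_ltn_trans le_uw).
Qed.

End MixedComposition.

Section DeltaComposition.
Variables (R : realType) (m : nat).
Notation series := (series R m).
Notation vseries := (vseries R m m).
Implicit Types (c : series) (d e : vseries) (x y z : delta_ser R m).

Lemma mcomp_one_vec c : mcomp (@one_vec R m) c = c.
Proof.
apply/funext => w; elim: w c => [|a w IH] c; first by rewrite mcomp_nil.
have one_vec_letter : dletter (@one_vec R m) a = @one_ser R m by rewrite /dletter; case: unlift.
by rewrite mcomp_cons one_vec_letter shuffle1l IH.
Qed.

Definition vcomp d e : vseries := fun i => shuffle (e i) (mcomp e (d i)).

Lemma dcomp_Delta d e : dcomp (Delta d) (Delta e) = Delta (vcomp d e).
Proof. by []. Qed.

Lemma dletter_vcomp d e a :
  dletter (vcomp d e) a = shuffle (dletter e a) (mcomp e (dletter d a)).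
Proof. by rewrite /dletter; case: unlift => // ; rewrite mcomp1 shuffle1l. Qed.

Lemma mcomp_mcomp d e c : mcomp e (mcomp d c) = mcomp (vcomp d e) c.
Proof.
apply/funext => w; have [n lt_wn] := ubnP (size w).
elim: n => // n IH in w c lt_wn *.
case: w lt_wn => [|a w] /= lt_wn; first by rewrite !mcomp_nil.
rewrite !mcomp_cons lquot_mcomp mcomp_shuffle dletter_vcomp -shuffleA.
apply: eq_shuffle => // u le_uw; apply: eq_shuffle => // v le_vu.
by rewrite IH // (leq_ltn_trans (leq_trans le_vu le_uw)).
Qed.

Lemma dcompA x y z : dcomp (dcomp x y) z = dcomp x (dcomp y z).
Proof.
case: x y z => [c] [d] [e]; rewrite !dcomp_Delta; congr Delta; apply/funext => i.
by rewrite /vcomp mcomp_shuffle mcomp_mcomp shuffleA.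
Qed.

Lemma dcomp1l x : dcomp (Delta (@one_vec R m)) x = x.
Proof.
case: x => d; rewrite dcomp_Delta /vcomp /one_vec mcomp1.
by congr Delta; apply/funext => i; rewrite shuffle1r.
Qed.

Lemma dcomp1r x : dcomp x (Delta (@one_vec R m)) = x.
Proof.
case: x => d; rewrite dcomp_Delta /vcomp.
by congr Delta; apply/funext => i; rewrite mcomp_one_vec shuffle1l.
Qed.

Lemma delta_pi_one : delta_pi (Delta (@one_vec R m)).
Proof. by exists (@one_vec R m); split=> // i; apply/eqP/oner_neq0. Qed.

Lemma delta_pi_dcomp x y : delta_pi x -> delta_pi y -> delta_pi (dcomp x y).
Proof.
move=> [c [pi_c ->]] [d [pi_d ->]]; exists (vcomp c d); split=> // i.
by rewrite /vcomp shuffle_nil mcomp_nil; apply/eqP; rewrite mulf_neq0 //; apply/eqP.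
Qed.

Lemma delta_pi_linv x : delta_pi x ->
  exists y, delta_pi y /\ dcomp y x = Delta (@one_vec R m).
Proof.
move=> [d [pi_d ->]].
pose L j := shuffle (d j) \o mcomp d.
pose D j w := d j [::] * diag d w.
pose y j := forward_subst (L j) (D j) (@one_ser R m).
have LyE j : L j (y j) = @one_ser R m.
  apply: forward_substP => [w|]; first by rewrite mulf_neq0 ?diag_neq0 //; apply/eqP.
  exact: triangular_comp (triangular_shuffle _) (triangular_mcomp _).
exists (Delta y); split.
  exists y; split=> // j yj0; move: (LyE j) => /(congr1 (fun f => f [::])).
  by rewrite /L /= shuffle_nil mcomp_nil yj0 mulr0 => /eqP; rewrite eq_sym oner_eq0.
by rewrite dcomp_Delta; congr Delta; apply/funext => j; apply: LyE.
Qed.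

End DeltaComposition.

Theorem theorem8 (R : realType) (m : nat) :
  let G := @delta_pi R m in
  let e := Delta (@one_vec R m) in
  [/\ (* closure *)
      (forall x y, G x -> G y -> G (dcomp x y)),
      (* associativity *)
      (forall x y z, G x -> G y -> G z ->
         dcomp (dcomp x y) z = dcomp x (dcomp y z)),
      (* identity delta_1 *)
      G e /\ (forall x, G x -> dcomp e x = x /\ dcomp x e = x) &
      (* inverses *)
      (forall x, G x -> exists y, G y /\ dcomp x y = e /\ dcomp y x = e)].
Proof.
move=> G e; split.
- exact: delta_pi_dcomp.
- by move=> x y z _ _ _; apply: dcompA.
- by split; [apply: delta_pi_one | move=> x _; rewrite dcomp1l dcomp1r].
- move=> x Gx; have [y [Gy yx]] := delta_pi_linv Gx.
  have [z [_ zy]] := delta_pi_linv Gy.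
  exists y; split; [exact: Gy | split; [|exact: yx]].
  exact: (linv_rinv (dcompA z y x) (dcomp1l x) (dcomp1r z) yx zy).
Qed.
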